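(* Let $\mathcal P$ be a problem that is fixed-parameter tractable with parameter $k$, i.e. there is an $f(k)\,\mathrm{poly}(n)$-time Turing machine solving $\mathcal P$ for some computable $f$. Then there exists a $\mathrm{poly}(g(k))$-memory $(g(k)^2n^{g(k)},\,g(k)^2n^{g(k)})$-time TM-TLM that solves $\mathcal P$, where $g$ is a sufficiently large computable function.
   Context: A Turing machine with two-level memory (TM-TLM) with main memory size $M$ has a main memory tape of $M$ cells, an unbounded external memory tape, and an address tape for the external memory; it has a finite state set, alphabets and a transition function $\delta: Q\times\Gamma\to Q\times\Gamma\times\{L,S,R\}$ acting on the main memory tape, plus special read and write states: on entering a read state the machine writes an address $addr$ on the address tape and the main memory cell under the head receives the content of external cell $addr$; on entering a write state, external cell $addr$ receives the content of the main memory cell under the head. Each Read/Write is one IO operation of unit cost. Time = number of transitions other than Read/Write; IO time = number of Read/Write operations. An $M$-memory $(T,IO)$-time TM-TLM has main memory size $M$, time complexity $O(T)$ and IO complexity $O(IO)$. Here $n$ is the input size. *)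

From mathcomp Require Import all_boot.
Set Implicit Arguments. Unset Strict Implicit. Unset Printing Implicit Defensive.

Inductive move := MoveL | MoveS | MoveR.

(* semi-infinite tape (cells 0,1,2,...); moving left at cell 0 stays *)
Definition move_head (m : move) (h : nat) : nat :=
  match m with MoveL => h.-1 | MoveS => h | MoveR => h.+1 end.

Definition upd {T : Type} (t : nat -> T) (p : nat) (a : T) : nat -> T :=
  fun i => if i == p then a else t i.

Unset Implicit Arguments.
Record TM (Sigma : Type) := {
  tm_state : finType;
  tm_sym : finType;
  tm_blank : tm_sym;
  tm_inp : Sigma -> tm_sym;
  tm_inp_inj : injective tm_inp;
  tm_inp_nonblank : forall a, tm_inp a != tm_blank;
  tm_start : tm_state;
  tm_halt : pred tm_state;
  tm_acc : pred tm_state;               (* accepting (meaningful on halting states) *)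
  tm_delta : tm_state -> tm_sym -> tm_state * tm_sym * move }.
Arguments tm_state {Sigma}. Arguments tm_sym {Sigma}. Arguments tm_blank {Sigma}.
Arguments tm_inp {Sigma}. Arguments tm_start {Sigma}. Arguments tm_halt {Sigma}.
Arguments tm_acc {Sigma}. Arguments tm_delta {Sigma}.
Set Implicit Arguments.

Definition tm_config Sigma (M : TM Sigma) : Type :=
  (tm_state M * (nat -> tm_sym M) * nat)%type.

Definition tm_step Sigma (M : TM Sigma) (c : tm_config M) : tm_config M :=
  let '(q, t, h) := c in
  if tm_halt M q then c else
  let '(q', a, m) := tm_delta M q (t h) in (q', upd t h a, move_head m h).

Definition tm_init Sigma (M : TM Sigma) (x : seq Sigma) : tm_config M :=
  (tm_start M,
   (fun i => match onth x i with Some a => tm_inp M a | None => tm_blank M end),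
   0).

Definition tm_run Sigma (M : TM Sigma) (x : seq Sigma) (t : nat) : tm_config M :=
  iter t (@tm_step Sigma M) (tm_init M x).

Definition tm_cstate Sigma (M : TM Sigma) (c : tm_config M) : tm_state M :=
  let '(q, _, _) := c in q.
Definition tm_ctape Sigma (M : TM Sigma) (c : tm_config M) : nat -> tm_sym M :=
  let '(_, t, _) := c in t.

Definition tm_decides_in Sigma (M : TM Sigma) (Q : pred (seq Sigma))
    (T : seq Sigma -> nat) : Prop :=
  forall x, tm_halt M (tm_cstate (tm_run M x (T x))) /\
            tm_acc M (tm_cstate (tm_run M x (T x))) = Q x.

(* output convention: the number v is written in unary on the tape:
   cells 0..v-1 non-blank, cell v blank *)
Definition tm_output_is Sigma (M : TM Sigma) (c : tm_config M) (v : nat) : Prop :=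
  (forall i, i < v -> tm_ctape c i != tm_blank M) /\ tm_ctape c v = tm_blank M.

Definition computable (f : nat -> nat) : Prop :=
  exists M : TM unit, forall k, exists t,
    tm_halt M (tm_cstate (tm_run M (nseq k tt) t)) /\
    tm_output_is (tm_run M (nseq k tt) t) (f k).

Definition poly_computable Sigma (kappa : seq Sigma -> nat) : Prop :=
  exists (M : TM Sigma) (c : nat), forall x,
    tm_halt M (tm_cstate (tm_run M x (size x ^ c + c))) /\
    tm_output_is (tm_run M x (size x ^ c + c)) (kappa x).

Definition fpt Sigma (Q : pred (seq Sigma)) (kappa : seq Sigma -> nat) : Prop :=
  poly_computable kappa /\
  exists f, computable f /\
  exists (M : TM Sigma) (c : nat),
    tm_decides_in M Q (fun x => f (kappa x) * (size x ^ c + c)).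

(* Normal states: apply delta (one unit of time).
   Read / Write states: on entering them the IO operation is performed
   (one unit of IO time, no time), then control passes to tl_next q.  *)
Inductive skind := KNormal | KRead | KWrite | KHalt.

Unset Implicit Arguments.
Record TLM (Sigma : Type) := {
  tl_state : finType;
  tl_sym : finType;
  tl_blank : tl_sym;
  tl_inp : Sigma -> tl_sym;
  tl_inp_inj : injective tl_inp;
  tl_inp_nonblank : forall a, tl_inp a != tl_blank;
  tl_start : tl_state;
  tl_kind : tl_state -> skind;
  tl_acc : pred tl_state;
  tl_next : tl_state -> tl_state;      (* continuation after a Read/Write *)
  (* action on the main memory tape, plus writing the (binary, write-only)
     address tape: optionally write a bit under the address head, move it *)
  tl_delta : tl_state -> tl_sym -> tl_state * tl_sym * move * option bool * move }.
Arguments tl_state {Sigma}. Arguments tl_sym {Sigma}. Arguments tl_blank {Sigma}.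
Arguments tl_inp {Sigma}. Arguments tl_start {Sigma}. Arguments tl_kind {Sigma}.
Arguments tl_acc {Sigma}. Arguments tl_next {Sigma}. Arguments tl_delta {Sigma}.
Set Implicit Arguments.

Record tl_config Sigma (D : TLM Sigma) := TLConfig {
  cf_state : tl_state D;
  cf_main : nat -> tl_sym D;    (* only cells 0..Msz-1 are ever accessed *)
  cf_head : nat;
  cf_ext : nat -> tl_sym D;     (* unbounded external memory *)
  cf_addr : seq bool;           (* address tape, least significant bit first *)
  cf_ahead : nat;
  cf_time : nat;                (* number of transitions other than Read/Write *)
  cf_io : nat }.                (* number of Read/Write operations *)

Definition addr_val (s : seq bool) : nat := foldr (fun (b : bool) (acc : nat) => nat_of_bool b + 2 * acc) 0 s.

Definition move_main (Msz : nat) (m : move) (h : nat) : nat :=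
  match m with
  | MoveL => h.-1 | MoveS => h | MoveR => if h.+1 < Msz then h.+1 else h end.

Definition tl_step Sigma (D : TLM Sigma) (Msz : nat) (c : tl_config D)
    : tl_config D :=
  let: TLConfig q mn h ex ad ah tm io := c in
  match tl_kind D q with
  | KHalt => c
  | KNormal =>
      let '(q', a, m, ob, ma) := tl_delta D q (mn h) in
      TLConfig q' (upd mn h a) (move_main Msz m h) ex
        (match ob with Some b => set_nth false ad ah b | None => ad end)
        (move_head ma ah) tm.+1 io
  | KRead =>
      TLConfig (tl_next D q) (upd mn h (ex (addr_val ad))) h ex ad ah tm io.+1
  | KWrite =>
      TLConfig (tl_next D q) mn h (upd ex (addr_val ad) (mn h)) ad ah tm io.+1
  end.

Definition tl_init Sigma (D : TLM Sigma) (x : seq Sigma) : tl_config D :=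
  TLConfig (tl_start D) (fun _ => tl_blank D) 0
    (fun i => match onth x i with Some a => tl_inp D a | None => tl_blank D end)
    [::] 0 0 0.

Definition tl_run Sigma (D : TLM Sigma) (Msz : nat) (x : seq Sigma) (s : nat)
    : tl_config D := iter s (@tl_step Sigma D Msz) (tl_init D x).

Definition tl_solves_on Sigma (D : TLM Sigma) (Msz : nat) (Q : pred (seq Sigma))
    (x : seq Sigma) (T IO : nat) : Prop :=
  exists s, let c := tl_run D Msz x s in
    tl_kind D (cf_state c) = KHalt /\ tl_acc D (cf_state c) = Q x /\
    cf_time c <= T /\ cf_io c <= IO.

From HB Require Import structures.
From mathcomp Require Import all_boot zify.
From Stdlib Require Import FunctionalExtensionality.
Set Implicit Arguments. Unset Strict Implicit.

(* A TM-TLM with a single main-memory cell simulates the FPT machine [M] step by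
   step: cell [i] of the tape of [M] is kept in external cell [i], and the head
   position of [M] is the number written on the address tape.  That tape is
   write-only, so the simulator learns bit [p] of the address by a probe: it
   overwrites the current external cell by a sentinel, sets bit [p] to [b], and
   reads; the sentinel comes back iff bit [p] already was [b].  Probing lets it move the
   head by binary increment/decrement, at cost O(h) at head position [h <= T].
   Hence [T = f(k) (n^c + c)] steps of [M] cost O(T^2) <= O(g(k)^2 n^g(k)) for
   [g k = f k + 2c + 1], and [g] is computable because computable functions are
   closed under adding a constant. *)

Inductive phase :=
  | Fetch | Exec | Store | StoreThenMove
  | ProbeLoad | ProbeSave | ProbeBlank | ProbeFlip | ProbeRead | ProbeTest
  | ProbeRestoreHit | ProbeRestoreMiss | BitHit | BitMiss | MarkAbove | StepBack
  | InitLoad | InitMark | InitStore.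

Scheme Equality for phase.
HB.instance Definition _ := comparableMixin phase_eq_dec.

Definition phase_enum : seq phase :=
  [:: Fetch; Exec; Store; StoreThenMove; ProbeLoad; ProbeSave; ProbeBlank;
      ProbeFlip; ProbeRead; ProbeTest; ProbeRestoreHit; ProbeRestoreMiss;
      BitHit; BitMiss; MarkAbove; StepBack; InitLoad; InitMark; InitStore].

Lemma phase_indexK : cancel (index^~ phase_enum) (nth Fetch phase_enum).
Proof. by case. Qed.

HB.instance Definition _ := Countable.copy phase (can_type phase_indexK).

Lemma phase_enumP : Finite.axiom phase_enum.
Proof. by case. Qed.

HB.instance Definition _ := isFinite.Build phase phase_enumP.

Lemma upd_eq T (f : nat -> T) i a : upd f i a i = a.
Proof. by rewrite /upd eqxx. Qed.

Lemma upd_neq T (f : nat -> T) i j a : j != i -> upd f i a j = f j.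
Proof. by rewrite /upd => /negbTE ->. Qed.

Lemma upd_id T (f : nat -> T) i : upd f i (f i) = f.
Proof. by apply: functional_extensionality => j; rewrite /upd; case: eqP => [->|]. Qed.

Lemma upd_upd T (f : nat -> T) i a b : upd (upd f i a) i b = upd f i b.
Proof. by apply: functional_extensionality => j; rewrite /upd; case: eqP. Qed.

Lemma addr_val_set_nth ad p (b : bool) :
  addr_val (set_nth false ad p b) + nth false ad p * 2 ^ p = addr_val ad + b * 2 ^ p.
Proof.
elim: ad p => [|x ad IH] [|p] /=; rewrite ?expn0; try lia.
- have addr_val_unit q : addr_val (ncons q false [:: b]) = b * 2 ^ q.
    by elim: q => [|q IHq] /=; rewrite ?IHq ?expnS; lia.
  by rewrite addr_val_unit expnS; lia.
- by have := IH p; rewrite expnS; nia.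
Qed.

Lemma odd_bit_double (x : bool) k : odd (x + 2 * k) = x.
Proof. by rewrite oddD oddM andFb addbF; case: x. Qed.

Lemma nth_addr_val ad p : nth false ad p = odd (addr_val ad %/ 2 ^ p).
Proof.
elim: ad p => [|x ad IH] [|p] /=; rewrite ?div0n ?nth_nil ?expn0 ?divn1 //.
- by rewrite odd_bit_double.
- rewrite IH expnS divnMA; congr (odd (_ %/ _)).
  by rewrite addnC mulnC divnMDl // divn_small ?addn0 //; case: x.
Qed.

Definition lowbits p (c : bool) := if c then (2 ^ p).-1 else 0.

Lemma lowbits_lt p c : lowbits p c < 2 ^ p.
Proof. by rewrite /lowbits; have := expn_gt0 2 p; case: c => /=; lia. Qed.

Lemma lowbitsS p c : lowbits p.+1 c = lowbits p c + c * 2 ^ p.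
Proof. by rewrite /lowbits expnS; have := expn_gt0 2 p; case: c => /=; lia. Qed.

Section AddressDigit.
Variables (ad : seq bool) (p L : nat).
Hypothesis L_lt : L < 2 ^ p.

Lemma nth_addr_val_split K : addr_val ad = L + 2 ^ p * K -> nth false ad p = odd K.
Proof.
by move=> adE; rewrite nth_addr_val adE addnC mulnC divnMDl ?expn_gt0 // divn_small ?addn0.
Qed.

Lemma addr_val_set_nth_split (b x : bool) K :
  addr_val ad = L + 2 ^ p * (x + 2 * K) ->
  addr_val (set_nth false ad p b) = L + 2 ^ p * (b + 2 * K).
Proof.
move=> adE; have := addr_val_set_nth ad p b.
by rewrite (nth_addr_val_split adE) odd_bit_double adE; nia.
Qed.

End AddressDigit.

Lemma tm_run_head_le Sigma (M : TM Sigma) x t : (tm_run M x t).2 <= t.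
Proof.
elim: t => [|t IH] //; rewrite /tm_run iterS -/(tm_run M x t).
case: (tm_run M x t) IH => [[q tp] h] /= IH.
case: (tm_halt M q) => /=; first lia.
by case: (tm_delta M q (tp h)) => [[q' a] []] /=; lia.
Qed.

Lemma tm_runD Sigma (M : TM Sigma) x m n :
  tm_run M x (m + n) = iter m (@tm_step _ M) (tm_run M x n).
Proof. by rewrite /tm_run iterD. Qed.

Lemma tm_run_halted Sigma (M : TM Sigma) x u w :
  tm_halt M (tm_cstate (tm_run M x u)) -> tm_run M x (w + u) = tm_run M x u.
Proof.
move=> halted; elim: w => [|w IH] //.
rewrite addSn {1}/tm_run iterS -/(tm_run M x (w + u)) IH.
by move: halted; case: (tm_run M x u) => [[q t] h] /= halted; rewrite /tm_step halted.
Qed.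

Section Simulator.
Variables (Sigma : Type) (M : TM Sigma).

(* A cell is the probe sentinel [None] or [Some (s, z)], where [z] flags tape cell 0
   (where a left move must leave the address unchanged).
   Besides the phase and the state of [M], a state holds the cell saved by a probe
   and three flags of the head-moving routine: returning to bit 0, decrementing,
   and "the bit above the address head is a marker still to be reset". *)
Local Notation cell := (option (tm_sym M * bool)).
Local Notation sim_state := (phase * tm_state M * cell * bool * bool * bool)%type.

Definition fetch (q : tm_state M) : sim_state := (Fetch, q, None, false, false, false).

Definition probe_target (back dec : bool) := if back then ~~ dec else dec.

Definition sim_kind (st : sim_state) : skind :=
  let '(ph, q, _, _, _, _) := st in
  match ph with
  | Fetch => if tm_halt M q then KHalt else KRead
  | Store | StoreThenMove | ProbeBlank | ProbeRestoreHit | ProbeRestoreMiss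
  | InitStore => KWrite
  | ProbeLoad | ProbeRead | InitLoad => KRead
  | _ => KNormal
  end.

Definition sim_next (st : sim_state) : sim_state :=
  let '(ph, q, v, back, dec, mark) := st in
  match ph with
  | Fetch => (Exec, q, v, back, dec, mark)
  | Store | InitStore => fetch q
  | StoreThenMove => (ProbeLoad, q, v, false, dec, false)
  | ProbeLoad => (ProbeSave, q, v, back, dec, mark)
  | ProbeBlank => (ProbeFlip, q, v, back, dec, mark)
  | ProbeRead => (ProbeTest, q, v, back, dec, mark)
  | ProbeRestoreHit => (BitHit, q, v, back, dec, mark)
  | ProbeRestoreMiss => (BitMiss, q, v, back, dec, mark)
  | InitLoad => (InitMark, q, v, back, dec, mark)
  | _ => st
  end.

Definition sim_delta (st : sim_state) (a : cell)
    : sim_state * cell * move * option bool * move :=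
  let '(ph, q, v, back, dec, mark) := st in
  let b := probe_target back dec in
  match ph with
  | Exec =>
      if a is Some (s, z) then
        let '(q', s', m) := tm_delta M q s in
        (match m with
         | MoveS => (Store, q', None, false, false, false)
         | MoveL => if z then (Store, q', None, false, false, false)
                    else (StoreThenMove, q', None, false, true, false)
         | MoveR => (StoreThenMove, q', None, false, false, false)
         end, Some (s', z), MoveS, None, MoveS)
      else (st, a, MoveS, None, MoveS)
  | ProbeSave => ((ProbeBlank, q, a, back, dec, mark), None, MoveS, None, MoveS)
  | ProbeFlip => ((ProbeRead, q, v, back, dec, mark), a, MoveS, Some b, MoveS)
  | ProbeTest =>
      if a == None then ((ProbeRestoreHit, q, v, back, dec, mark), v, MoveS, None, MoveS)
      else ((ProbeRestoreMiss, q, v, back, dec, mark), v, MoveS, Some (~~ b), MoveS)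
  | BitHit =>
      if back then (fetch q, a, MoveS, (if mark then Some dec else None), MoveS)
      else ((StepBack, q, v, true, dec, false), a, MoveS, Some (~~ dec), MoveS)
  | BitMiss =>
      if back then ((MarkAbove, q, v, back, dec, mark), a, MoveS, Some (~~ dec), MoveR)
      else ((ProbeLoad, q, v, false, dec, mark), a, MoveS, Some dec, MoveR)
  | MarkAbove =>
      ((StepBack, q, v, true, dec, true), a, MoveS,
       (if mark then Some dec else None), MoveL)
  | StepBack => ((ProbeLoad, q, v, true, dec, mark), a, MoveS, None, MoveL)
  | InitMark =>
      if a is Some (s, _) then
        ((InitStore, q, v, back, dec, mark), Some (s, true), MoveS, None, MoveS)
      else (st, a, MoveS, None, MoveS)
  | _ => (st, a, MoveS, None, MoveS)
  end.

Lemma sim_inp_inj : injective (fun a : Sigma => Some (tm_inp M a, false) : cell).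
Proof. by move=> a b [] /(@tm_inp_inj _ M). Qed.

Lemma sim_inp_nonblank a : (Some (tm_inp M a, false) : cell) != Some (tm_blank M, false).
Proof. by apply/eqP => [[]] /eqP; rewrite (negbTE (@tm_inp_nonblank _ M a)). Qed.

Definition simulator : TLM Sigma := {|
  tl_state := sim_state;
  tl_sym := cell;
  tl_blank := Some (tm_blank M, false);
  tl_inp := fun a => Some (tm_inp M a, false);
  tl_inp_inj := sim_inp_inj;
  tl_inp_nonblank := sim_inp_nonblank;
  tl_start := (InitLoad, tm_start M, None, false, false, false);
  tl_kind := sim_kind;
  tl_acc := fun st => let '(_, q, _, _, _, _) := st in tm_acc M q;
  tl_next := sim_next;
  tl_delta := sim_delta |}.

Local Notation Cfg := (@TLConfig Sigma simulator).
Local Notation step := (@tl_step Sigma simulator 1).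

Definition reach (c c' : tl_config simulator) := exists s, iter s step c = c'.

Lemma reach_refl c : reach c c.
Proof. by exists 0. Qed.

Lemma reach_step c c' : reach (step c) c' -> reach c c'.
Proof. by case=> s <-; exists s.+1; rewrite iterSr. Qed.

Lemma reach_step_exists c (P : tl_config simulator -> Prop) :
  (exists c', reach (step c) c' /\ P c') -> exists c', reach c c' /\ P c'.
Proof. by case=> c' [/reach_step run Pc']; exists c'. Qed.

Lemma reach_trans c1 c2 c3 : reach c1 c2 -> reach c2 c3 -> reach c1 c3.
Proof. by case=> s1 <- [s2 <-]; exists (s2 + s1); rewrite iterD. Qed.

Section Probe.
Variables (q : tm_state M) (v : cell) (back dec mark : bool).
Variables (mn E : nat -> cell) (ad : seq bool) (p tm io : nat).
Hypothesis E_cells : forall i, E i != None.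

Lemma probe_hit : nth false ad p = probe_target back dec ->
  exists mn' v' ad',
    reach (Cfg (ProbeLoad, q, v, back, dec, mark) mn 0 E ad p tm io)
          (Cfg (BitHit, q, v', back, dec, mark) mn' 0 E ad' p tm.+3 io.+4) /\
    addr_val ad' = addr_val ad.
Proof.
set b := probe_target back dec => adp.
have adE : addr_val (set_nth false ad p b) = addr_val ad.
  by have := addr_val_set_nth ad p b; rewrite adp; lia.
do 3 eexists; split; last exact: adE.
do 4 (apply: reach_step; rewrite /tl_step /= ?upd_eq).
apply: reach_step; rewrite /tl_step /= -/b adE upd_eq.
apply: reach_step; rewrite /tl_step /=.
apply: reach_step; rewrite /tl_step /= adE !upd_eq (upd_upd E) upd_id.
exact: reach_refl.
Qed.

Lemma probe_miss : nth false ad p = ~~ probe_target back dec ->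
  exists mn' v' ad',
    reach (Cfg (ProbeLoad, q, v, back, dec, mark) mn 0 E ad p tm io)
          (Cfg (BitMiss, q, v', back, dec, mark) mn' 0 E ad' p tm.+3 io.+4) /\
    addr_val ad' = addr_val ad.
Proof.
set b := probe_target back dec => adp.
set ad1 := set_nth false ad p b.
have ad1E : addr_val ad1 + (~~ b) * 2 ^ p = addr_val ad + b * 2 ^ p.
  by have := addr_val_set_nth ad p b; rewrite adp.
have ad1p : nth false ad1 p = b by rewrite nth_set_nth /= eqxx.
have ad1_neq : addr_val ad1 != addr_val ad.
  by apply/eqP; have := expn_gt0 2 p; case: (b) ad1E => /=; lia.
have adE : addr_val (set_nth false ad1 p (~~ b)) = addr_val ad.
  have := addr_val_set_nth ad1 p (~~ b); rewrite ad1p.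
  by have := expn_gt0 2 p; case: (b) ad1E => /=; lia.
do 3 eexists; split; last exact: adE.
do 4 (apply: reach_step; rewrite /tl_step /= ?upd_eq).
apply: reach_step; rewrite /tl_step /= -/b -/ad1 (upd_neq _ _ ad1_neq).
apply: reach_step; rewrite /tl_step /= upd_eq (negbTE (E_cells _)).
apply: reach_step; rewrite /tl_step /= adE !upd_eq (upd_upd E) upd_id.
exact: reach_refl.
Qed.

End Probe.

Section Carry.
Variables (q : tm_state M) (dec : bool) (E : nat -> cell).
Hypothesis E_cells : forall i, E i != None.

(* Bits below the address head equal [dec], the bit under it is [~~ dec].  The head
   steps left and probes for [~~ dec]: below the head this misses, and the head
   leaves [~~ dec] as a marker before stepping on; it hits only its own marker,
   i.e. exactly when the left move was blocked at bit 0. *)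
Lemma step_back_run v mark mn ad p H tm io :
  addr_val ad = lowbits p dec + 2 ^ p * (~~ dec + 2 * H) ->
  exists mn' ad',
    reach (Cfg (StepBack, q, v, true, dec, mark) mn 0 E ad p tm io)
          (Cfg (fetch q) mn' 0 E ad' 0 (tm + 6 * p + 5) (io + 4 * p + 4)) /\
    addr_val ad' = lowbits p dec + 2 ^ p * ((if mark then dec else ~~ dec) + 2 * H).
Proof.
elim: p v mark mn ad H tm io => [|p IH] v mark mn ad H tm io adE.
  have adp : nth false ad 0 = probe_target true dec.
    by rewrite (nth_addr_val_split (lowbits_lt 0 dec) adE) odd_bit_double.
  have [mn1 [v1 [ad1 [run1 ad1E]]]] :=
    probe_hit q v mark mn E tm.+1 io adp.
  rewrite adE in ad1E.
  exists mn1, (if mark then set_nth false ad1 0 dec else ad1); split.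
  - have -> : tm + 6 * 0 + 5 = tm.+4.+1 by lia.
    have -> : io + 4 * 0 + 4 = io.+4 by lia.
    apply: reach_step; rewrite /tl_step /= upd_id; apply: reach_trans run1 _.
    apply: reach_step; rewrite /tl_step /= upd_id.
    by case: (mark); apply: reach_refl.
  - by case: (mark) => //; exact: (addr_val_set_nth_split (lowbits_lt 0 dec) _ ad1E).
have lowp := lowbits_lt p dec.
have adE' : addr_val ad = lowbits p dec + 2 ^ p * (dec + 2 * (~~ dec + 2 * H)).
  by rewrite adE lowbitsS expnS; case: (dec) => /=; nia.
have adp : nth false ad p = ~~ probe_target true dec.
  by rewrite negbK (nth_addr_val_split lowp adE') odd_bit_double.
have [mn1 [v1 [ad1 [run1 ad1E]]]] :=
  probe_miss q v mark mn tm.+1 io E_cells adp.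
rewrite adE' in ad1E.
set ad2 := set_nth false ad1 p (~~ dec).
have ad2E : addr_val ad2 = (lowbits p dec + ~~ dec * 2 ^ p) + 2 ^ p.+1 * (~~ dec + 2 * H).
  by rewrite (addr_val_set_nth_split lowp _ ad1E) expnS; nia.
have lowp' : lowbits p dec + ~~ dec * 2 ^ p < 2 ^ p.+1.
  by rewrite expnS; case: (dec) => /=; lia.
set ad3 := if mark then set_nth false ad2 p.+1 dec else ad2.
have ad3E : addr_val ad3 =
    lowbits p dec + 2 ^ p * (~~ dec + 2 * ((if mark then dec else ~~ dec) + 2 * H)).
  rewrite /ad3; case: (mark); last by rewrite ad2E expnS; nia.
  by rewrite (addr_val_set_nth_split lowp' _ ad2E) expnS; nia.
have [mn2 [ad4 [run2 ad4E]]] := IH v1 true mn1 ad3 _ tm.+4.+2 io.+4 ad3E.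
exists mn2, ad4; split.
  apply: reach_step; rewrite /tl_step /= upd_id; apply: reach_trans run1 _.
  apply: reach_step; rewrite /tl_step /= -/ad2.
  apply: reach_step; rewrite /tl_step /=.
  have -> : tm + 6 * p.+1 + 5 = tm.+4.+2 + 6 * p + 5 by lia.
  have -> : io + 4 * p.+1 + 4 = io.+4 + 4 * p + 4 by lia.
  by move: run2; rewrite !upd_id /ad3; case: (mark).
by rewrite ad4E lowbitsS expnS; case: (dec); case: (mark) => /=; nia.
Qed.

(* [a] is the address before the carry started; the bits below [p] have already
   been flipped from [~~ dec] to [dec]. *)
Lemma carry_run v mn ad p K a tm io :
  addr_val ad = lowbits p dec + 2 ^ p * K ->
  a = lowbits p (~~ dec) + 2 ^ p * K ->
  (dec -> 0 < K) ->
  exists mn' ad' tm' io',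
    reach (Cfg (ProbeLoad, q, v, false, dec, false) mn 0 E ad p tm io)
          (Cfg (fetch q) mn' 0 E ad' 0 tm' io') /\
    addr_val ad' = (if dec then a.-1 else a.+1) /\
    tm' + io' + 8 * p <= tm + io + 18 * a + 17.
Proof.
elim/ltn_ind: K p v mn ad tm io => K IH p v mn ad tm io adE aE K_pos.
have lowp := lowbits_lt p dec.
set H := K./2.
have KE : K = odd K + 2 * H by have := odd_double_half K; rewrite -muln2; lia.
have adp : nth false ad p = odd K by rewrite (nth_addr_val_split lowp adE).
have p_le_a : p <= a.
  have := ltn_expl p (ltnSn 1); rewrite aE /lowbits.
  by case: (dec) K_pos => /= K_pos; [have := K_pos erefl; nia | lia].
case: (boolP (odd K == dec)) => /eqP Kodd.
  have hit : nth false ad p = probe_target false dec by rewrite adp Kodd.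
  have [mn1 [v1 [ad1 [run1 ad1E]]]] := probe_hit q v false mn E tm io hit.
  rewrite adE KE Kodd in ad1E.
  set ad2 := set_nth false ad1 p (~~ dec).
  have ad2E : addr_val ad2 = lowbits p dec + 2 ^ p * (~~ dec + 2 * H).
    exact: (addr_val_set_nth_split lowp _ ad1E).
  have [mn3 [ad3 [run3 ad3E]]] := step_back_run v1 false mn1 tm.+4 io.+4 ad2E.
  exists mn3, ad3, (tm.+4 + 6 * p + 5), (io.+4 + 4 * p + 4); split; [|split].
  - apply: reach_trans run1 _.
    by apply: reach_step; rewrite /tl_step /= -/ad2 upd_id.
  - rewrite ad3E aE KE Kodd /lowbits.
    by have := expn_gt0 2 p; case: (dec) => /=; nia.
  - lia.
have {}Kodd : odd K = ~~ dec by move: Kodd; case: (odd K); case: (dec).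
rewrite Kodd in KE.
have miss : nth false ad p = ~~ probe_target false dec by rewrite adp Kodd.
have [mn1 [v1 [ad1 [run1 ad1E]]]] := probe_miss q v false mn tm io E_cells miss.
rewrite adE KE in ad1E.
set ad2 := set_nth false ad1 p dec.
have ad2E : addr_val ad2 = lowbits p.+1 dec + 2 ^ p.+1 * H.
  by rewrite (addr_val_set_nth_split lowp _ ad1E) lowbitsS expnS; nia.
have H_lt : H < K by move: K_pos; rewrite KE; case: (dec) => /= [/(_ erefl)|]; lia.
have aE' : a = lowbits p.+1 (~~ dec) + 2 ^ p.+1 * H.
  by rewrite aE KE lowbitsS expnS; case: (dec) => /=; nia.
have H_pos : dec -> 0 < H.
  by rewrite KE in K_pos; case: (dec) K_pos => //= /(_ erefl); lia.
have [mn3 [ad3 [tm3 [io3 [run3 [ad3E cost3]]]]]] :=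
  IH H H_lt p.+1 v1 mn1 ad2 tm.+4 io.+4 ad2E aE' H_pos.
exists mn3, ad3, tm3, io3; split; [|split] => //; last lia.
apply: reach_trans run1 _.
by apply: reach_step; rewrite /tl_step /= -/ad2 upd_id.
Qed.

End Carry.

Definition encode_tape (t : nat -> tm_sym M) : nat -> cell := fun i => Some (t i, i == 0).

Lemma encode_tape_upd t h s :
  upd (encode_tape t) h (Some (s, h == 0)) = encode_tape (upd t h s).
Proof.
by apply: functional_extensionality => i; rewrite /upd /encode_tape; case: eqP => [->|].
Qed.

Definition simulates (cf : tl_config simulator) (c : tm_config M) : Prop :=
  let '(q, t, h) := c in
  [/\ cf_state cf = fetch q, cf_head cf = 0, cf_ext cf = encode_tape t,
      addr_val (cf_addr cf) = h & cf_ahead cf = 0].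

Lemma shift_head_run q t (dec : bool) (mn : nat -> cell) ad h tm io :
  addr_val ad = h -> (dec -> 0 < h) ->
  exists cf,
    reach (Cfg (ProbeLoad, q, None, false, dec, false) mn 0 (encode_tape t) ad 0 tm io) cf /\
    simulates cf (q, t, if dec then h.-1 else h.+1) /\
    cf_time cf + cf_io cf <= tm + io + 18 * h + 17.
Proof.
move=> adE h_pos.
have adE' : addr_val ad = lowbits 0 dec + 2 ^ 0 * h by rewrite adE expn0 mul1n; case: (dec).
have hE : h = lowbits 0 (~~ dec) + 2 ^ 0 * h by rewrite expn0 mul1n; case: (dec).
have [mn' [ad' [tm' [io' [run [ad'E cost]]]]]] :=
  @carry_run q dec (encode_tape t) (fun _ => isT) None mn ad 0 h h tm io adE' hE h_pos.
by exists (Cfg (fetch q) mn' 0 (encode_tape t) ad' 0 tm' io'); split; [|split] => //=; lia.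
Qed.

Lemma simulate_step cf q t h :
  simulates cf (q, t, h) -> ~~ tm_halt M q ->
  exists cf', reach cf cf' /\ simulates cf' (tm_step (q, t, h)) /\
    cf_time cf' + cf_io cf' <= cf_time cf + cf_io cf + 18 * h + 20.
Proof.
case: cf => st mn hd ex ad ah tm io [/= -> -> -> adE ->] q_run.
rewrite /tm_step (negbTE q_run).
case delta: (tm_delta M q (t h)) => [[q' s'] m].
have move_sim (dec : bool) mn' : (dec -> 0 < h) ->
  exists cf', reach (Cfg (ProbeLoad, q', None, false, dec, false) mn' 0
                       (encode_tape (upd t h s')) ad 0 tm.+1 io.+2) cf' /\
    simulates cf' (q', upd t h s', if dec then h.-1 else h.+1) /\
    cf_time cf' + cf_io cf' <= tm + io + 18 * h + 20.
  move=> h_pos; have [cf' [run [sim cost]]] :=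
    @shift_head_run q' (upd t h s') dec mn' ad h tm.+1 io.+2 adE h_pos.
  by exists cf'; split => //; split => //; lia.
apply: reach_step_exists; rewrite /tl_step /= (negbTE q_run) adE.
apply: reach_step_exists; rewrite /tl_step /= delta.
case: m delta => delta.
- case: (eqVneq h 0) => [h0 | h_pos].
    rewrite h0 in adE *; apply: reach_step_exists; rewrite /tl_step /= adE upd_eq.
    eexists; split; first exact: reach_refl.
    by split; [split; rewrite //= encode_tape_upd | rewrite /=; lia].
  apply: reach_step_exists; rewrite /tl_step /= adE upd_eq.
  have -> : Some (s', false) = Some (s', h == 0) by rewrite (negbTE h_pos).
  by rewrite encode_tape_upd; apply: move_sim; rewrite lt0n.
- apply: reach_step_exists; rewrite /tl_step /= adE upd_eq.
  eexists; split; first exact: reach_refl.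
  by split; [split; rewrite //= encode_tape_upd | rewrite /=; lia].
- apply: reach_step_exists; rewrite /tl_step /= adE upd_eq encode_tape_upd.
  exact: move_sim.
Qed.

Lemma simulate_init x :
  let cf := tl_run simulator 1 x 3 in
  simulates cf (tm_init M x) /\ cf_time cf + cf_io cf = 3.
Proof.
case: x => [|a x]; split=> //; split=> //=;
  apply: functional_extensionality => -[|i] //; rewrite /upd /encode_tape //=.
by case: (onth x i).
Qed.

Lemma simulate_run x t : exists s,
  let cf := tl_run simulator 1 x s in
  simulates cf (tm_run M x t) /\ cf_time cf + cf_io cf <= 3 + 20 * (t * t.+1).
Proof.
elim: t => [|t [s [sim cost]]].
  by exists 3; have [sim cost] := simulate_init x; split; last rewrite cost.
have head_le := tm_run_head_le M x t.
rewrite /tm_run iterS -/(tm_run M x t).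
move: sim head_le; case: (tm_run M x t) => [[q tp] h] sim /= head_le.
case q_halt: (tm_halt M q).
  exists s; split=> //.
  have : t * t.+1 <= t.+1 * t.+2 by apply: leq_mul.
  lia.
have [cf' [[s' run] [sim' cost']]] := simulate_step sim (negbT q_halt).
exists (s' + s); rewrite /tl_run iterD -/(tl_run simulator 1 x s) run.
by split; [rewrite /tm_step q_halt in sim' | nia].
Qed.

End Simulator.

(* The machine marks cell 0, runs [Mf], rewinds to the marked cell, scans right over
   the unary output and appends [d] further non-blank symbols. *)
Section PadOutput.
Variables (Mf : TM unit) (d : nat).

Local Notation sym := (tm_sym Mf * bool)%type.
Local Notation ctl := (tm_state Mf + option (option (option 'I_d.+2)))%type.

Definition Rewind : ctl := inr (Some None).
Definition Scan : ctl := inr (Some (Some None)).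
Definition Pad (j : nat) : ctl := inr (Some (Some (Some (inord j)))).

Definition pad_halt (st : ctl) : bool :=
  if st is inr (Some (Some (Some j))) then nat_of_ord j == d.+1 else false.

Definition pad_delta (st : ctl) (a : sym) : ctl * sym * move :=
  let '(s, origin) := a in
  match st with
  | inl q => if tm_halt Mf q then (Rewind, a, MoveS)
             else let '(q', s', m) := tm_delta Mf q s in (inl q', (s', origin), m)
  | inr None => (inl (tm_start Mf), (s, true), MoveS)
  | inr (Some None) => if origin then (Scan, a, MoveS) else (Rewind, a, MoveL)
  | inr (Some (Some None)) =>
      if s == tm_blank Mf then (Pad 0, a, MoveS) else (Scan, a, MoveR)
  | inr (Some (Some (Some j))) =>
      if nat_of_ord j < d then (Pad j.+1, (tm_inp Mf tt, false), MoveR)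
      else (Pad d.+1, (tm_blank Mf, false), MoveS)
  end.

Lemma pad_inp_inj : injective (fun u : unit => (tm_inp Mf u, false) : sym).
Proof. by move=> [] []. Qed.

Lemma pad_inp_nonblank u : ((tm_inp Mf u, false) : sym) != (tm_blank Mf, false).
Proof. by apply/eqP => [[]] /eqP; rewrite (negbTE (@tm_inp_nonblank _ Mf u)). Qed.

Definition pad_tm : TM unit := {|
  tm_state := ctl;
  tm_sym := sym;
  tm_blank := (tm_blank Mf, false);
  tm_inp := fun u => (tm_inp Mf u, false);
  tm_inp_inj := pad_inp_inj;
  tm_inp_nonblank := pad_inp_nonblank;
  tm_start := inr None;
  tm_halt := pad_halt;
  tm_acc := fun _ => false;
  tm_delta := pad_delta |}.

Local Notation step := (@tm_step unit pad_tm).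

Definition with_origin (t : nat -> tm_sym Mf) : nat -> sym := fun i => (t i, i == 0).

Lemma pad_step_inl q t h : ~~ tm_halt Mf q ->
  step (inl q, with_origin t, h) =
  let '(q', t', h') := tm_step (q, t, h) in (inl q', with_origin t', h').
Proof.
move=> q_run; rewrite /tm_step /= (negbTE q_run) /=.
case: (tm_delta Mf q (t h)) => [[q' s'] m] /=.
congr (_, _, _); apply: functional_extensionality => i; rewrite /upd /with_origin.
by case: eqP => [->|].
Qed.

Lemma pad_run_inl x u :
  (forall w, w < u -> ~~ tm_halt Mf (tm_cstate (tm_run Mf x w))) ->
  tm_run pad_tm x u.+1 = let '(q, t, h) := tm_run Mf x u in (inl q, with_origin t, h).
Proof.
elim: u => [|u IH] running.
  rewrite /tm_run /= /tm_step /tm_init /=.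
  case: x {running} => [|a x] /=; congr (_, _, _);
    apply: functional_extensionality => -[|i] //.
  by rewrite /upd /with_origin /=; case: (onth x i).
rewrite /tm_run iterS -/(tm_run pad_tm x u.+1) IH; last by move=> w w_lt; apply: running; lia.
rewrite iterS -/(tm_run Mf x u).
by move: (running u (ltnSn u)); case: (tm_run Mf x u) => [[q t] h]; apply: pad_step_inl.
Qed.

Lemma rewind_run t h : iter h step (Rewind, with_origin t, h) = (Rewind, with_origin t, 0).
Proof.
elim: h => [|h IH] //.
by rewrite iterSr {2}/tm_step /= upd_id.
Qed.

Lemma scan_run t v j i : i + j = v -> (forall k, k < v -> t k != tm_blank Mf) ->
  iter j step (Scan, with_origin t, i) = (Scan, with_origin t, v).
Proof.
elim: j i => [|j IH] i ijE nonblank; first by rewrite -ijE addn0.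
rewrite iterSr {2}/tm_step /= (negbTE (nonblank i _)); last lia.
by rewrite upd_id; apply: (IH i.+1) => //; lia.
Qed.

Definition padded (t : nat -> tm_sym Mf) v j : nat -> sym :=
  fun i => if v <= i < v + j then (tm_inp Mf tt, false) else with_origin t i.

Lemma padded0 t v : padded t v 0 = with_origin t.
Proof. by apply: functional_extensionality => i; rewrite /padded addn0 ltnNge andbN. Qed.

Lemma pad_run t v j : j <= d ->
  iter j step (Pad 0, padded t v 0, v) = (Pad j, padded t v j, v + j).
Proof.
elim: j => [|j IH] j_le; first by rewrite addn0.
rewrite iterS IH; last lia.
rewrite {1}/tm_step /= inordK; last lia.
rewrite (_ : (j == d.+1) = false); last by apply/eqP; lia.
case: (padded t v j (v + j)) => s origin.
rewrite /= inordK; last lia.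
rewrite j_le /=; congr (_, _, _); last lia.
apply: functional_extensionality => i; rewrite /upd /padded.
case: eqP => [->|i_neq]; first by rewrite leq_addr /= addnS ltnS leqnn.
suff -> : (v <= i < v + j.+1) = (v <= i < v + j) by [].
by apply/idP/idP => /andP [v_le i_lt]; rewrite v_le /=; lia.
Qed.

Lemma pad_tm_output x v :
  (exists t, tm_halt Mf (tm_cstate (tm_run Mf x t)) /\ tm_output_is (tm_run Mf x t) v) ->
  exists t, tm_halt pad_tm (tm_cstate (tm_run pad_tm x t)) /\
            tm_output_is (tm_run pad_tm x t) (v + d).
Proof.
case=> t0 [halt0 out0].
have halts : exists t, tm_halt Mf (tm_cstate (tm_run Mf x t)) by exists t0.
have [t1 halt1 t1_min] := ex_minnP halts.
have out1 : tm_output_is (tm_run Mf x t1) v.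
  by rewrite -(tm_run_halted (t0 - t1) halt1) subnK ?t1_min.
have running w : w < t1 -> ~~ tm_halt Mf (tm_cstate (tm_run Mf x w)).
  by move=> w_lt; apply/negP => /t1_min; lia.
move: (pad_run_inl running) halt1 out1.
case: (tm_run Mf x t1) => [[q T] h] run1 halt_q [nonblank blank_v].
rewrite /= in halt_q nonblank blank_v.
have rewound : tm_run pad_tm x (h + (1 + t1.+1)) = (Rewind, with_origin T, 0).
  rewrite !tm_runD run1 /= halt_q /= upd_id.
  exact: rewind_run.
have scanned : tm_run pad_tm x (v + (1 + (h + (1 + t1.+1)))) = (Scan, with_origin T, v).
  rewrite tm_runD [tm_run _ _ (1 + _)]tm_runD rewound /tm_step /= upd_id.
  exact: (scan_run (i := 0)).
set N := v + _ in scanned.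
have padded_all : tm_run pad_tm x (d + (1 + N)) = (Pad d, padded T v d, v + d).
  rewrite tm_runD [tm_run _ _ (1 + _)]tm_runD scanned /= blank_v eqxx /= upd_id.
  by rewrite -(padded0 T v) pad_run.
exists (1 + (d + (1 + N))).
rewrite tm_runD padded_all /tm_step /= inordK // (ltn_eqF (ltnSn d)).
case: (padded T v d (v + d)) => s origin /=; rewrite inordK // ltnn /= inordK //.
split=> //.
split=> [i i_lt|] /=; last by rewrite upd_eq.
rewrite upd_neq ?ltn_eqF // /padded; case: ifP => [_|]; first exact: pad_inp_nonblank.
move/negbT; rewrite negb_and -ltnNge -leqNgt => /orP [i_lt_v|]; last lia.
by apply/eqP => -[/eqP]; rewrite (negbTE (nonblank i i_lt_v)).
Qed.

End PadOutput.

Lemma computable_addn f d : computable f -> computable (fun k => f k + d).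
Proof. by case=> Mf Mf_f; exists (pad_tm Mf d) => k; apply: pad_tm_output. Qed.

Lemma fpt_time_sq_le n K c : 0 < n ->
  K * (n ^ c + c) * (K * (n ^ c + c)).+1 <=
  (c + 1) ^ 2 * ((K + (2 * c + 1)) ^ 2 * n ^ (K + (2 * c + 1))).
Proof.
move=> n_pos; set T := K * _; set G := K + _; set P := n ^ c.
have P_pos : 0 < P by rewrite expn_gt0 n_pos.
have T_le : T.+1 <= G * (c + 1) * P by rewrite /T /G; nia.
have PP_le : P * P <= n ^ G by rewrite -expnD leq_pexp2l // /G; lia.
apply: (@leq_trans ((G * (c + 1) * P) * (G * (c + 1) * P))).
  by apply: leq_mul; lia.
rewrite (_ : _ * _ = (c + 1) ^ 2 * G ^ 2 * (P * P)); last by rewrite !expnS !expn0; nia.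
by rewrite -mulnA; apply: leq_mul => //; apply: leq_mul.
Qed.

Theorem theorem4 (Sigma : finType) (Q : pred (seq Sigma))
    (kappa : seq Sigma -> nat) :
  fpt Q kappa ->
  exists g : nat -> nat, computable g /\
  exists (D : TLM Sigma) (m : nat -> nat) (c : nat),
    forall x : seq Sigma,
      0 < m (kappa x) <= c * g (kappa x) ^ c + c /\
      tl_solves_on D (m (kappa x)) Q x
        (c * (g (kappa x) ^ 2 * size x ^ g (kappa x)) + c)
        (c * (g (kappa x) ^ 2 * size x ^ g (kappa x)) + c).
Proof.
case=> _ [f [f_comp [M [c0 M_decides]]]].
exists (fun k => f k + (2 * c0 + 1)); split; first exact: computable_addn.
(* On the empty input [size x ^ G] vanishes; the constant [C] absorbs that run. *)
set T0 := f (kappa [::]) * (0 ^ c0 + c0).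
set C := 20 * (c0 + 1) ^ 2 + 20 * (T0 * T0.+1) + 3.
exists (simulator M), (fun _ => 1), C => x; split; first by rewrite /C; lia.
set T := f (kappa x) * (size x ^ c0 + c0).
set G := f (kappa x) + (2 * c0 + 1).
have cost_le : 3 + 20 * (T * T.+1) <= C * (G ^ 2 * size x ^ G) + C.
  case: (posnP (size x)) => [/size0nil x_nil | n_pos].
    have -> : T = T0 by rewrite /T /T0 x_nil.
    have : 3 + 20 * (T0 * T0.+1) <= C by rewrite /C; lia.
    lia.
  have := fpt_time_sq_le (f (kappa x)) c0 n_pos; rewrite -/T -/G.
  have : 20 * (c0 + 1) ^ 2 <= C by rewrite /C; lia.
  nia.
have [s [sim cost]] := simulate_run M x T.
have [halted accepts] := M_decides x; rewrite -/T in halted accepts.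
exists s; move: sim halted accepts cost.
case: (tm_run M x T) => [[q tp] h] [/= -> _ _ _ _] /= halted accepts cost.
by rewrite halted; split=> //; split; lia.
Qed.
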